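(* Let $a=\sum_{t=0}^7a_te_t$ and $b=\sum_{t=0}^7b_te_t$ be nonzero elements of $C\ell_{1,2}$ with $P(a)=P(b)=0$, and let $d\in C\ell_{1,2}$. Then the equation $axb=d$ (in the unknown $x\in C\ell_{1,2}$) is solvable if and only if $$\frac{aa'db'b}{16(a_0^2+a_2^2+a_4^2+a_6^2)(b_0^2+b_2^2+b_4^2+b_6^2)}=d,$$ in which case all the solutions are given by $$x=\frac{a'db'}{16(a_0^2+a_2^2+a_4^2+a_6^2)(b_0^2+b_2^2+b_4^2+b_6^2)}+y-\frac{a'aybb'}{16(a_0^2+a_2^2+a_4^2+a_6^2)(b_0^2+b_2^2+b_4^2+b_6^2)},\qquad y\in C\ell_{1,2}\text{ arbitrary}.$$
   Context: $C\ell_{1,2}$ is the real Clifford algebra generated by $i_1,i_2,i_3$ with $i_1^2=1$, $i_2^2=i_3^2=-1$ and $i_ti_m=-i_mi_t$ for $t\neq m$, with real basis $e_0=1$, $e_1=i_1$, $e_2=i_2$, $e_3=i_1i_2$, $e_4=i_3$, $e_5=i_1i_3$, $e_6=i_2i_3$, $e_7=i_1i_2i_3$. For $a=\sum_{t=0}^7 a_te_t$ ($a_t\in\mathbb{R}$) define: the prime $a'=a_0+a_1e_1-a_2e_2+a_3e_3-a_4e_4+a_5e_5-a_6e_6-a_7e_7$; $N(a)=a_0^2-a_1^2+a_2^2-a_3^2+a_4^2-a_5^2+a_6^2-a_7^2$; $T(a)=a_0a_7+a_2a_5-a_1a_6-a_3a_4$; $P(a)=N(a)^2+4T(a)^2$.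 *)

From HB Require Import structures.
From mathcomp Require Import all_boot all_order all_algebra.
From mathcomp Require Import ring.
Set Implicit Arguments. Unset Strict Implicit. Unset Printing Implicit Defensive.
Import Order.TTheory GRing.Theory Num.Theory.
Local Open Scope ring_scope.

(* An element a = sum_(t=0..7) a_t e_t with real basis
   e0=1, e1=i1, e2=i2, e3=i1 i2, e4=i3, e5=i1 i3, e6=i2 i3, e7=i1 i2 i3,
   i.e. e_t is the product (in increasing order) of the generators i_(j+1)
   for the bits j set in t. *)
Record cl12 (R : realFieldType) := Cl12 {
  c0 : R; c1 : R; c2 : R; c3 : R; c4 : R; c5 : R; c6 : R; c7 : R }.

Section Cl12.
Variable R : realFieldType.
Implicit Types a b : cl12 R.

Definition cl_zero : cl12 R := Cl12 0 0 0 0 0 0 0 0.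
Definition cl_one : cl12 R := Cl12 1 0 0 0 0 0 0 0.
Definition cl_add a b : cl12 R :=
  Cl12 (c0 a + c0 b) (c1 a + c1 b) (c2 a + c2 b) (c3 a + c3 b)
       (c4 a + c4 b) (c5 a + c5 b) (c6 a + c6 b) (c7 a + c7 b).
Definition cl_opp a : cl12 R :=
  Cl12 (- c0 a) (- c1 a) (- c2 a) (- c3 a) (- c4 a) (- c5 a) (- c6 a) (- c7 a).
Definition cl_sub a b : cl12 R := cl_add a (cl_opp b).
Definition cl_scale (r : R) a : cl12 R :=
  Cl12 (r * c0 a) (r * c1 a) (r * c2 a) (r * c3 a)
       (r * c4 a) (r * c5 a) (r * c6 a) (r * c7 a).

(* Clifford product, obtained by bilinear extension of the products of basis
   blades under i1^2 = 1, i2^2 = i3^2 = -1, i_t i_m = - i_m i_t (t <> m). *)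
Definition cl_mul a b : cl12 R :=
  Cl12
    (c0 a * c0 b + c1 a * c1 b - c2 a * c2 b + c3 a * c3 b - c4 a * c4 b + c5 a * c5 b - c6 a * c6 b - c7 a * c7 b)
    (c0 a * c1 b + c1 a * c0 b + c2 a * c3 b - c3 a * c2 b + c4 a * c5 b - c5 a * c4 b - c6 a * c7 b - c7 a * c6 b)
    (c0 a * c2 b + c1 a * c3 b + c2 a * c0 b - c3 a * c1 b + c4 a * c6 b - c5 a * c7 b - c6 a * c4 b - c7 a * c5 b)
    (c0 a * c3 b + c1 a * c2 b - c2 a * c1 b + c3 a * c0 b - c4 a * c7 b + c5 a * c6 b - c6 a * c5 b - c7 a * c4 b)
    (c0 a * c4 b + c1 a * c5 b - c2 a * c6 b + c3 a * c7 b + c4 a * c0 b - c5 a * c1 b + c6 a * c2 b + c7 a * c3 b)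
    (c0 a * c5 b + c1 a * c4 b + c2 a * c7 b - c3 a * c6 b - c4 a * c1 b + c5 a * c0 b + c6 a * c3 b + c7 a * c2 b)
    (c0 a * c6 b + c1 a * c7 b + c2 a * c4 b - c3 a * c5 b - c4 a * c2 b + c5 a * c3 b + c6 a * c0 b + c7 a * c1 b)
    (c0 a * c7 b + c1 a * c6 b - c2 a * c5 b + c3 a * c4 b + c4 a * c3 b - c5 a * c2 b + c6 a * c1 b + c7 a * c0 b).

Definition cl_prime a : cl12 R :=
  Cl12 (c0 a) (c1 a) (- c2 a) (c3 a) (- c4 a) (c5 a) (- c6 a) (- c7 a).

Definition clN a : R :=
  c0 a ^+ 2 - c1 a ^+ 2 + c2 a ^+ 2 - c3 a ^+ 2 + c4 a ^+ 2 - c5 a ^+ 2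
  + c6 a ^+ 2 - c7 a ^+ 2.
Definition clT a : R :=
  c0 a * c7 a + c2 a * c5 a - c1 a * c6 a - c3 a * c4 a.
Definition clP a : R := clN a ^+ 2 + 4 * clT a ^+ 2.

Definition clE a : R := c0 a ^+ 2 + c2 a ^+ 2 + c4 a ^+ 2 + c6 a ^+ 2.

End Cl12.

Section Sanity.
Variable R : realFieldType.
Let i1 : cl12 R := Cl12 0 1 0 0 0 0 0 0.
Let i2 : cl12 R := Cl12 0 0 1 0 0 0 0 0.
Let i3 : cl12 R := Cl12 0 0 0 0 1 0 0 0.
Let e (k : nat) : cl12 R :=
  Cl12 (k == 0)%:R (k == 1)%:R (k == 2)%:R (k == 3)%:R
       (k == 4)%:R (k == 5)%:R (k == 6)%:R (k == 7)%:R.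
Lemma sanity_i1sq : cl_mul i1 i1 = cl_one R.
Proof. by rewrite /cl_mul /= /cl_one; congr Cl12; ring. Qed.
Lemma sanity_i2sq : cl_mul i2 i2 = cl_opp (cl_one R).
Proof. by rewrite /cl_mul /= /cl_one /cl_opp /=; congr Cl12; ring. Qed.
Lemma sanity_i3sq : cl_mul i3 i3 = cl_opp (cl_one R).
Proof. by rewrite /cl_mul /= /cl_one /cl_opp /=; congr Cl12; ring. Qed.
Lemma sanity_anti12 : cl_mul i1 i2 = cl_opp (cl_mul i2 i1).
Proof. by rewrite /cl_mul /= /cl_opp /=; congr Cl12; ring. Qed.
Lemma sanity_anti13 : cl_mul i1 i3 = cl_opp (cl_mul i3 i1).
Proof. by rewrite /cl_mul /= /cl_opp /=; congr Cl12; ring. Qed.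
Lemma sanity_anti23 : cl_mul i2 i3 = cl_opp (cl_mul i3 i2).
Proof. by rewrite /cl_mul /= /cl_opp /=; congr Cl12; ring. Qed.
Lemma sanity_e3 : cl_mul i1 i2 = e 3.
Proof. by rewrite /cl_mul /= /e /=; congr Cl12; ring. Qed.
Lemma sanity_e5 : cl_mul i1 i3 = e 5.
Proof. by rewrite /cl_mul /= /e /=; congr Cl12; ring. Qed.
Lemma sanity_e6 : cl_mul i2 i3 = e 6.
Proof. by rewrite /cl_mul /= /e /=; congr Cl12; ring. Qed.
Lemma sanity_e7 : cl_mul (cl_mul i1 i2) i3 = e 7.
Proof. by rewrite /cl_mul /= /e /=; congr Cl12; ring. Qed.
Lemma sanity_assoc (a b c : cl12 R) :
  cl_mul (cl_mul a b) c = cl_mul a (cl_mul b c).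
Proof. by case: a b c => ? ? ? ? ? ? ? ? [? ? ? ? ? ? ? ?] [? ? ? ? ? ? ? ?];
  rewrite /cl_mul /=; congr Cl12; ring. Qed.
End Sanity.

From HB Require Import structures.
From mathcomp Require Import all_boot all_order all_algebra.
From mathcomp Require Import ring lra.
Set Implicit Arguments. Unset Strict Implicit. Unset Printing Implicit Defensive.
Import GRing.Theory Num.Theory.
Local Open Scope ring_scope.

(* When P(a) = 0, i.e. N(a) = T(a) = 0, the identity a a' a = 4 E(a) a makes
   a' / (4 E(a)) an inner (von Neumann) inverse of a; here E(a) > 0, since
   N(a) = 0 forces a = 0 once E(a) = 0.
   The theorem is then Penrose's criterion for a x b = d in an arbitrary ring:
   if a g a = a and b h b = b, the equation is solvable iff a g d h b = d,
   with general solution x = g d h + y - g a y b h. *)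

Section InnerInverseEquation.
Variables (A : pzRingType) (a b g h : A).
Hypotheses (aga : a * g * a = a) (bhb : b * h * b = b).

Lemma mul2_inner_invK y : a * g * a * y * b * h * b = a * y * b.
Proof.
have bhb' : b * (h * b) = b by rewrite mulrA.
by rewrite aga -!mulrA bhb' !mulrA.
Qed.

Lemma mul2_solvableP d : (exists x, a * x * b = d) <-> a * g * d * h * b = d.
Proof.
split=> [[x <-] | agdhb]; first by rewrite !mulrA mul2_inner_invK.
by exists (g * d * h); rewrite !mulrA.
Qed.

Lemma mul2_solutionsP d x : a * g * d * h * b = d ->
  a * x * b = d <-> exists y, x = g * d * h + y - g * a * y * b * h.
Proof.
move=> agdhb; split=> [axb | [y ->]].
  by exists x; rewrite -axb !mulrA addrAC subrr add0r.
by rewrite mulrBr mulrDr mulrBl mulrDl !mulrA agdhb mul2_inner_invK addrK.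
Qed.

End InnerInverseEquation.

Section ScaledInnerInverseEquation.
Variables (F : fieldType) (A : algType F).

Lemma scaled_inner_inv (u u' : A) k : k != 0 -> u * u' * u = k *: u ->
  u * (k^-1 *: u') * u = u.
Proof. by move=> k_neq0 uu'u; rewrite -scalerAr -scalerAl uu'u scalerA mulVf ?scale1r. Qed.

Variables (a a' b b' : A) (ka kb : F).
Hypotheses (ka_neq0 : ka != 0) (kb_neq0 : kb != 0).
Hypotheses (aa'a : a * a' * a = ka *: a) (bb'b : b * b' * b = kb *: b).

Lemma scale_inner_inv_mul u v w : (ka * kb)^-1 *: (u * a' * v * b' * w) =
  u * (ka^-1 *: a') * v * (kb^-1 *: b') * w.
Proof.
by rewrite -!(scalerAr, scalerAl) scalerA -invfM [kb * ka]mulrC.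
Qed.

Lemma scaled_mul2_solvableP d :
  (exists x, a * x * b = d) <-> (ka * kb)^-1 *: (a * a' * d * b' * b) = d.
Proof.
by rewrite scale_inner_inv_mul; apply/mul2_solvableP; apply: scaled_inner_inv.
Qed.

Lemma scaled_mul2_solutionsP d x : (ka * kb)^-1 *: (a * a' * d * b' * b) = d ->
  a * x * b = d <-> exists y,
    x = (ka * kb)^-1 *: (a' * d * b') + y - (ka * kb)^-1 *: (a' * a * y * b * b').
Proof.
have aga := scaled_inner_inv ka_neq0 aa'a; have bhb := scaled_inner_inv kb_neq0 bb'b.
rewrite scale_inner_inv_mul => /(mul2_solutionsP aga bhb) ->.
have scale_sol : (ka * kb)^-1 *: (a' * d * b') = ka^-1 *: a' * d * (kb^-1 *: b').
  by have := scale_inner_inv_mul 1 d 1; rewrite !(mul1r, mulr1).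
have scale_hom y : (ka * kb)^-1 *: (a' * a * y * b * b') =
    ka^-1 *: a' * a * y * b * (kb^-1 *: b').
  by have := scale_inner_inv_mul 1 (a * y * b) 1; rewrite !(mul1r, mulr1) !mulrA.
by split=> -[y ->]; exists y; rewrite scale_sol scale_hom.
Qed.

End ScaledInnerInverseEquation.

Ltac cl_ring :=
  repeat match goal with x : cl12 _ |- _ => case: x => ? ? ? ? ? ? ? ? end; cbn;
  rewrite /cl_zero /cl_one /cl_add /cl_opp /cl_scale /cl_mul /cl_prime /=;
  congr Cl12; ring.

Section Cl12Algebra.
Variable R : realFieldType.
Implicit Types (a b : cl12 R) (r s : R).

Definition cl12_tuple a := (c0 a, c1 a, c2 a, c3 a, c4 a, c5 a, c6 a, c7 a).
Definition tuple_cl12 (t : R * R * R * R * R * R * R * R) :=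
  let: (x0, x1, x2, x3, x4, x5, x6, x7) := t in Cl12 x0 x1 x2 x3 x4 x5 x6 x7.

Lemma cl12_tupleK : cancel cl12_tuple tuple_cl12. Proof. by case. Qed.

HB.instance Definition _ := Choice.copy (cl12 R) (can_type cl12_tupleK).

Lemma cl_addA : associative (@cl_add R). Proof. move=> *; cl_ring. Qed.
Lemma cl_addC : commutative (@cl_add R). Proof. move=> *; cl_ring. Qed.
Lemma cl_add0 : left_id (cl_zero R) (@cl_add R). Proof. move=> *; cl_ring. Qed.
Lemma cl_addN : left_inverse (cl_zero R) (@cl_opp R) (@cl_add R).
Proof. move=> *; cl_ring. Qed.

HB.instance Definition _ :=
  GRing.isZmodule.Build (cl12 R) cl_addA cl_addC cl_add0 cl_addN.

Lemma cl_mulA : associative (@cl_mul R). Proof. move=> *; cl_ring. Qed.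
Lemma cl_mul1 : left_id (cl_one R) (@cl_mul R). Proof. move=> *; cl_ring. Qed.
Lemma cl_mul_1 : right_id (cl_one R) (@cl_mul R). Proof. move=> *; cl_ring. Qed.
Lemma cl_mulDl : left_distributive (@cl_mul R) (@cl_add R).
Proof. move=> *; cl_ring. Qed.
Lemma cl_mulDr : right_distributive (@cl_mul R) (@cl_add R).
Proof. move=> *; cl_ring. Qed.
Lemma cl_one_neq0 : cl_one R != cl_zero R.
Proof. by apply/eqP => -[/eqP]; rewrite oner_eq0. Qed.

HB.instance Definition _ := GRing.Zmodule_isNzRing.Build (cl12 R)
  cl_mulA cl_mul1 cl_mul_1 cl_mulDl cl_mulDr cl_one_neq0.

Lemma cl_scaleA r s a : cl_scale r (cl_scale s a) = cl_scale (r * s) a.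
Proof. cl_ring. Qed.
Lemma cl_scale1 : left_id 1 (@cl_scale R). Proof. move=> *; cl_ring. Qed.
Lemma cl_scaleDr : right_distributive (@cl_scale R) (@cl_add R).
Proof. move=> *; cl_ring. Qed.
Lemma cl_scaleDl a : {morph (@cl_scale R)^~ a : r s / r + s >-> cl_add r s}.
Proof. move=> *; cl_ring. Qed.

HB.instance Definition _ := GRing.Zmodule_isLmodule.Build R (cl12 R)
  cl_scaleA cl_scale1 cl_scaleDr cl_scaleDl.

Lemma cl_scale_mull r a b : cl_scale r (cl_mul a b) = cl_mul (cl_scale r a) b.
Proof. cl_ring. Qed.
Lemma cl_scale_mulr r a b : cl_scale r (cl_mul a b) = cl_mul a (cl_scale r b).
Proof. cl_ring. Qed.

HB.instance Definition _ := GRing.Lmodule_isLalgebra.Build R (cl12 R) cl_scale_mull.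
HB.instance Definition _ := GRing.Lalgebra_isAlgebra.Build R (cl12 R) cl_scale_mulr.

Lemma cl_addE a b : cl_add a b = a + b. Proof. by []. Qed.
Lemma cl_subE a b : cl_sub a b = a - b. Proof. by []. Qed.
Lemma cl_mulE a b : cl_mul a b = a * b. Proof. by []. Qed.
Lemma cl_scaleE r a : cl_scale r a = r *: a. Proof. by []. Qed.
Definition cl12E := (cl_addE, cl_subE, cl_mulE, cl_scaleE).

End Cl12Algebra.

Section Cl12InnerInverse.
Variable R : realFieldType.
Implicit Type a : cl12 R.

Lemma clP_eq0 a : (clP a == 0) = (clN a == 0) && (clT a == 0).
Proof.
have T2_ge0 : 0 <= 4 * clT a ^+ 2 by rewrite mulr_ge0 ?ler0n ?sqr_ge0.
by rewrite /clP paddr_eq0 ?sqr_ge0 // sqrf_eq0 mulf_eq0 pnatr_eq0 sqrf_eq0.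
Qed.

Lemma cl_mul_prime_mul a : a * cl_prime a * a = (4 * clE a) *: a
  - clN a *: Cl12 (3 * c0 a) (c1 a) (3 * c2 a) (c3 a) (3 * c4 a) (c5 a) (3 * c6 a) (c7 a)
  - clT a *: Cl12 (2 * c7 a) (- 2 * c6 a) (2 * c5 a) (- 2 * c4 a)
                  (- 2 * c3 a) (2 * c2 a) (- 2 * c1 a) (2 * c0 a).
Proof. rewrite /clE /clN /clT; cl_ring. Qed.

Lemma clP0_mul_prime_mul a : clP a = 0 -> a * cl_prime a * a = (4 * clE a) *: a.
Proof.
move/eqP; rewrite clP_eq0 => /andP[/eqP N0 /eqP T0].
by rewrite cl_mul_prime_mul N0 T0 !scale0r !subr0.
Qed.

Lemma clE_neq0 a : a != 0 -> clP a = 0 -> clE a != 0.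
Proof.
move=> a_neq0 /eqP; rewrite clP_eq0 => /andP[/eqP N0 _]; apply: contra a_neq0.
case: a N0 => x0 x1 x2 x3 x4 x5 x6 x7; rewrite /clN /clE /= => N0 /eqP E0.
have := sqr_ge0 x0; have := sqr_ge0 x1; have := sqr_ge0 x2; have := sqr_ge0 x3.
have := sqr_ge0 x4; have := sqr_ge0 x5; have := sqr_ge0 x6; have := sqr_ge0 x7.
move=> *; apply/eqP; congr Cl12; apply/eqP; rewrite -sqrf_eq0; apply/eqP; lra.
Qed.

End Cl12InnerInverse.

Theorem theorem4p1 (R : realFieldType) (a b d : cl12 R) :
  a <> cl_zero R -> b <> cl_zero R -> clP a = 0 -> clP b = 0 ->
  let D := 16 * clE a * clE b in
  ((exists x : cl12 R, cl_mul (cl_mul a x) b = d) <->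
     cl_scale D^-1
       (cl_mul (cl_mul (cl_mul (cl_mul a (cl_prime a)) d) (cl_prime b)) b) = d)
  /\
  ((exists x : cl12 R, cl_mul (cl_mul a x) b = d) ->
     forall x : cl12 R,
       cl_mul (cl_mul a x) b = d <->
       exists y : cl12 R,
         x = cl_sub
               (cl_add (cl_scale D^-1 (cl_mul (cl_mul (cl_prime a) d) (cl_prime b))) y)
               (cl_scale D^-1
                  (cl_mul (cl_mul (cl_mul (cl_mul (cl_prime a) a) y) b) (cl_prime b)))).
Proof.
move=> /eqP a_neq0 /eqP b_neq0 Pa Pb D.
have ka_neq0 : 4 * clE a != 0 by rewrite mulf_neq0 ?pnatr_eq0 ?(clE_neq0 a_neq0).
have kb_neq0 : 4 * clE b != 0 by rewrite mulf_neq0 ?pnatr_eq0 ?(clE_neq0 b_neq0).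
have aa'a := clP0_mul_prime_mul Pa; have bb'b := clP0_mul_prime_mul Pb.
have solvableP := scaled_mul2_solvableP ka_neq0 kb_neq0 aa'a bb'b d.
have -> : D = 4 * clE a * (4 * clE b) by rewrite /D; ring.
(* Rewriting, rather than conversion, into ring notation: unifying nested
   cl_mul's with ring products would unfold them componentwise. *)
rewrite !cl12E; split=> [|/solvableP solvable x]; first exact: solvableP.
apply: iff_trans (scaled_mul2_solutionsP ka_neq0 kb_neq0 aa'a bb'b x solvable) _.
by split=> -[y ->]; exists y; rewrite !cl12E.
Qed.
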